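(* Let $X$ be a nonempty CFG-space over a Boolean ring $B$ and $f:X\to B$ a contractive map, where $B$ carries the metric $d(a,b)=a+b$. Then there exists $u\in X$ such that $f(x)\le f(u)$ for all $x\in X$.
   Context: $B$ is a Boolean ring ($a\vee b=a+b+ab$, $a\le b\iff ab=a$; $a_1\oplus\cdots\oplus a_n$ denotes a sum of pairwise disjoint elements). A Boolean metric space over $B$: set $X$ with $d:X\times X\to B$, $d(x,y)=0\iff x=y$, symmetric, $d(x,z)\le d(x,y)\vee d(y,z)$. For $x_1,\dots,x_n\in X$, $a_i\in B$ with $a_1\oplus\cdots\oplus a_n=1$, $x$ is a convex combination of the $x_i$ with coefficients $a_i$ if $a_id(x,x_i)=0$ for all $i$. A CFG-space is a space in which all such combinations exist and every element is a convex combination of elements of some fixed finite subset. A map $f$ is contractive if $d(f(x),f(y))\le d(x,y)$. *)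

From HB Require Import structures.
From mathcomp Require Import all_boot all_order all_algebra.
From Stdlib Require List.
Set Implicit Arguments. Unset Strict Implicit. Unset Printing Implicit Defensive.
Import GRing.Theory.
Local Open Scope ring_scope.

(* A Boolean ring: a (possibly trivial) commutative ring in which every
   element is idempotent; we take B : comPzRingType with hypothesis
   [boolean_ring B]. *)
Definition boolean_ring (B : comPzRingType) : Prop := forall a : B, a * a = a.

Definition bjoin (B : comPzRingType) (a b : B) : B := a + b + a * b.

Definition ble (B : comPzRingType) (a b : B) : Prop := a * b = a.

Definition bmetric (B : comPzRingType) (X : Type) (d : X -> X -> B) : Prop :=
  (forall x y, d x y = 0 <-> x = y) /\
  (forall x y, d x y = d y x) /\
  (forall x y z, ble (d x z) (bjoin (d x y) (d y z))).

(* a_1 (+) ... (+) a_n = 1 : pairwise disjoint elements with sum 1 *)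
Definition bpartition (B : comPzRingType) (n : nat) (a : 'I_n -> B) : Prop :=
  (forall i j : 'I_n, i != j -> a i * a j = 0) /\ \sum_(i < n) a i = 1.

Definition is_convex_comb (B : comPzRingType) (X : Type) (d : X -> X -> B)
    (n : nat) (x : X) (xs : 'I_n -> X) (a : 'I_n -> B) : Prop :=
  forall i : 'I_n, a i * d x (xs i) = 0.

Definition CFG_space (B : comPzRingType) (X : Type) (d : X -> X -> B) : Prop :=
  bmetric d /\
  (forall (n : nat) (xs : 'I_n -> X) (a : 'I_n -> B),
      bpartition a -> exists x : X, is_convex_comb d x xs a) /\
  (exists S : seq X, forall x : X,
      exists (n : nat) (xs : 'I_n -> X) (a : 'I_n -> B),
        (forall i, List.In (xs i) S) /\ bpartition a /\ is_convex_comb d x xs a).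

(* contractive map X -> B, with B carrying the metric d(a,b) = a + b *)
Definition contractive_toB (B : comPzRingType) (X : Type) (d : X -> X -> B)
    (f : X -> B) : Prop :=
  forall x y, ble (f x + f y) (d x y).

(* Key identity: if x is a convex combination of x_1..x_n with coefficients
   a_1 (+) ... (+) a_n = 1, then contractivity forces a_i f(x) = a_i f(x_i),
   hence f(x) = sum_i a_i f(x_i).  Consequently:
   - any two values f(s), f(u) have an upper bound f(v) among the values of f:
     take v the convex combination of s, u with coefficients a = f(s)(1 - f(u))
     and 1 - a, for which f(v) = a + f(u) = f(s) \/ f(u);
   - by induction, the values of f on the finite generating set S are bounded
     by a single f(u);
   - every f(x) is a disjoint combination of values on S, so f(x) <= f(u). *)
From HB Require Import structures.
From mathcomp Require Import all_boot all_order all_algebra.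
Set Implicit Arguments. Unset Strict Implicit. Unset Printing Implicit Defensive.
Import GRing.Theory.
Local Open Scope ring_scope.

Section BooleanRingFacts.
Variable B : comPzRingType.
Hypothesis HB : boolean_ring B.

(* A Boolean ring has characteristic 2: expand (a + a)^2 = a + a. *)
Lemma boolean_addxx (a : B) : a + a = 0.
Proof.
have h := HB (a + a).
rewrite mulrDl !mulrDr HB in h.
apply/eqP; rewrite -(addrI (a + a) (_ : (a + a) + (a + a) = (a + a) + 0)) //.
by rewrite addr0 -{3}h !addrA.
Qed.

Lemma boolean_opp (a : B) : - a = a.
Proof. by apply/eqP; rewrite eq_sym -subr_eq0 opprK boolean_addxx. Qed.

Lemma boolean_mul_eq (c p q : B) : c * (p + q) = 0 -> c * p = c * q.
Proof. by move=> h; apply/eqP; rewrite -subr_eq0 boolean_opp -mulrDr h. Qed.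

Lemma boolean_mul_compl (a : B) : a * (1 - a) = 0.
Proof. by rewrite mulrBr mulr1 HB subrr. Qed.

Lemma bpartition_pair (a : B) :
  bpartition (fun i : 'I_2 => if i == ord0 then a else 1 - a).
Proof.
split; last by rewrite big_ord_recr big_ord_recl big_ord0 /= addr0 addrC subrK.
move=> [[|[|k]] hi] [[|[|k']] hj] //= _.
- exact: boolean_mul_compl.
- by rewrite mulrC boolean_mul_compl.
Qed.
End BooleanRingFacts.

Lemma ble_trans (B : comPzRingType) (p q r : B) :
  ble p q -> ble q r -> ble p r.
Proof. by rewrite /ble => h1 h2; rewrite -h1 -mulrA h2. Qed.

Lemma ble_ann (B : comPzRingType) (c p q : B) :
  ble p q -> c * q = 0 -> c * p = 0.
Proof. by rewrite /ble => h1 h2; rewrite -h1 mulrCA h2 mulr0. Qed.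

Lemma ble_sum (B : comPzRingType) (n : nat) (c g : 'I_n -> B) (u : B) :
  (forall j, ble (g j) u) -> ble (\sum_(j < n) c j * g j) u.
Proof.
by move=> hg; rewrite /ble mulr_suml; apply: eq_bigr => j _; rewrite -mulrA hg.
Qed.

Section ContractiveMaps.
Variables (B : comPzRingType) (X : Type) (d : X -> X -> B) (f : X -> B).
Hypotheses (HB : boolean_ring B) (Hf : contractive_toB d f).

Lemma contractive_agree (c : B) (x y : X) :
  c * d x y = 0 -> c * f x = c * f y.
Proof. by move=> h; apply: boolean_mul_eq HB _ _ _ (ble_ann (Hf x y) h). Qed.

Lemma contractive_convex_comb (n : nat) (x : X) (xs : 'I_n -> X)
    (a : 'I_n -> B) :
  bpartition a -> is_convex_comb d x xs a ->
  f x = \sum_(j < n) a j * f (xs j).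
Proof.
move=> [_ Hsum] Hx; rewrite -[f x]mul1r -Hsum mulr_suml.
by apply: eq_bigr => j _; apply: contractive_agree.
Qed.

Hypothesis Hcomb : forall (n : nat) (xs : 'I_n -> X) (a : 'I_n -> B),
  bpartition a -> exists x : X, is_convex_comb d x xs a.

(* Any two values of f are bounded by a third value of f (in fact by the
   value f s \/ f u, realised at a two-point convex combination). *)
Lemma contractive_upper_bound2 (s u : X) :
  exists v : X, ble (f s) (f v) /\ ble (f u) (f v).
Proof.
pose a : B := f s * (1 - f u).
pose xs : 'I_2 -> X := fun i => if i == ord0 then s else u.
have [v Hv] := Hcomb xs (bpartition_pair HB a).
have au : a * f u = 0.
  by rewrite /a -mulrA [(1 - _) * _]mulrC boolean_mul_compl // mulr0.
have fv : f v = a + f u.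
  rewrite (contractive_convex_comb (bpartition_pair HB a) Hv).
  rewrite big_ord_recr big_ord_recl big_ord0 /xs /= addr0.
  by rewrite mulrBl mul1r au subr0 {2}/a mulrAC HB.
exists v; split.
  by rewrite /ble fv mulrDr /a mulrA HB mulrBr mulr1 subrK.
by rewrite /ble fv mulrDr mulrC au add0r HB.
Qed.

Lemma contractive_upper_bound_seq (x0 : X) (S : seq X) :
  exists u : X, forall s, List.In s S -> ble (f s) (f u).
Proof.
elim: S => [|s S [u Hu]]; first by exists x0.
have [v [Hsv Huv]] := contractive_upper_bound2 s u.
exists v => t [<- //|ht].
exact: ble_trans (Hu t ht) Huv.
Qed.
End ContractiveMaps.

Theorem mainTheorem19 (B : comPzRingType) (X : Type) (d : X -> X -> B)
    (f : X -> B) (HB : boolean_ring B) (HX : CFG_space d)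
    (Hne : inhabited X) (Hf : contractive_toB d f) :
  exists u : X, forall x : X, ble (f x) (f u).
Proof.
case: HX => _ [Hcomb [S HS]]; case: Hne => x0.
have [u Hu] := contractive_upper_bound_seq HB Hf Hcomb x0 S.
exists u => x.
have [n [xs [a [Hin [Ha Hx]]]]] := HS x.
rewrite (contractive_convex_comb HB Hf Ha Hx).
by apply: ble_sum => j; apply: Hu.
Qed.
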